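(* Let $G$ be a finite group and $H \leqslant G$ a nilpotent subgroup. If $|HP|$ divides $|G|$ for every Sylow subgroup $P$ of $G$ (for every prime), then $H$ is subnormal in $G$.
   Context: $HP$ denotes the product set $\{hx : h \in H, x \in P\}$. $H$ is subnormal in $G$ if there is a finite chain $H = H_0 \lhd H_1 \lhd \dots \lhd H_r = G$. *)

From mathcomp Require Import all_boot.
From mathcomp Require Import fingroup morphism pgroup sylow nilpotent gseries.

From mathcomp Require Import all_boot.
From mathcomp Require Import fingroup morphism pgroup sylow nilpotent gseries.
From mathcomp Require Import maximal zify.

(* Since |HP| |H ∩ P| = |H| |P| and |P| is the full p-part of |G|, the
   divisibility |HP| | |G| forces H ∩ P to be a Sylow p-subgroup of H; for
   nilpotent H that subgroup is O_p(H). Thus O_p(H) lies in every Sylow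
   p-subgroup of G, i.e. in O_p(G), for every p, so H lies in the Fitting
   subgroup F(G). A subgroup of a nilpotent group is subnormal in it, and
   F(G) is normal in G. *)

Set Implicit Arguments.
Unset Strict Implicit.
Open Scope group_scope.

Lemma Sylow_setI_mul_dvd (gT : finGroupType) (p : nat) (G H P : {group gT}) :
  p.-Sylow(G) P -> #|H * P| %| #|G| -> p.-Sylow(H) (H :&: P).
Proof.
move=> sylP dvd_HP_G.
have le_HP_G : logn p #|H * P| <= logn p #|G| by apply: dvdn_leq_log.
have logP : logn p #|P| = logn p #|G| by rewrite (card_Hall sylP) logn_part.
have HP_gt0 : 0 < #|H * P|.
  by rewrite (leq_trans (cardG_gt0 H)) // subset_leq_card ?mulG_subl.
have := congr1 (logn p) (mul_cardG H P).
rewrite !lognM ?cardG_gt0 // logP => log_eq.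
have le_H_HP : logn p #|H| <= logn p #|H :&: P| by lia.
have le_HP_H : logn p #|H :&: P| <= logn p #|H|.
  by rewrite dvdn_leq_log ?cardG_gt0 ?cardSg ?subsetIl.
rewrite pHallE subsetIl p_part /=.
rewrite (card_pgroup (pgroupS (subsetIr H P) (pHall_pgroup sylP))).
by apply/eqP; congr (p ^ _)%N; apply/anti_leq/andP.
Qed.

Lemma nilpotent_pcore_sub (gT : finGroupType) (p : nat) (H P : {group gT}) :
  nilpotent H -> p.-Sylow(H) (H :&: P) -> 'O_p(H) \subset P.
Proof.
move=> nilH sylHP.
by rewrite -(eq_Hall_pcore (nilpotent_pcore_Hall p nilH) sylHP) subsetIr.
Qed.

Lemma sub_pcore_Sylows (gT : finGroupType) (p : nat) (G K : {group gT}) :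
  (forall P : {group gT}, p.-Sylow(G) P -> K \subset P) -> K \subset 'O_p(G).
Proof.
by move=> sKSyl; apply/bigcapsP=> P; rewrite max_pgroup_Sylow; apply: sKSyl.
Qed.

Lemma nilpotent_sub_Fitting (gT : finGroupType) (G H : {group gT}) :
  nilpotent H -> (forall p, prime p -> 'O_p(H) \subset 'O_p(G)) ->
  H \subset 'F(G).
Proof.
move=> nilH sOHG; rewrite -{1}(nilpotent_Fitting nilH) FittingEgen gen_subG.
apply/bigcupsP=> [[p _]] /=; rewrite mem_primes => /andP[p_pr _].
by rewrite (subset_trans (sOHG p p_pr)) // -p_core_Fitting pcore_sub.
Qed.

Theorem lemma3p6 (gT : finGroupType) (G H : {group gT}) :
  H \subset G -> nilpotent H ->
  (forall (p : nat) (P : {group gT}), prime p -> (P \in 'Syl_p(G))%g ->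
     #|(H * P)%g| %| #|G|) ->
  (H <|<| G)%g.
Proof.
move=> _ nilH dvd_HP_G.
have sHF : H \subset 'F(G).
  apply: nilpotent_sub_Fitting => // p p_pr.
  apply: sub_pcore_Sylows => P sylP.
  have sylPG : P \in 'Syl_p(G) by rewrite inE.
  apply: nilpotent_pcore_sub nilH _.
  exact: Sylow_setI_mul_dvd sylP (dvd_HP_G p P p_pr sylPG).
exact: subnormal_trans (nilpotent_subnormal (Fitting_nil G) sHF)
        (normal_subnormal (Fitting_normal G)).
Qed.
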